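(* Neither the sequential fan $S_\omega$ nor Arens' space $S_2$ is self-selective.
   Context: For spaces $Y$, $X$, a map $\varphi:Y\to\mathcal P(X)\setminus\{\emptyset\}$ is lower semicontinuous (l.s.c.) if $\{y:\varphi(y)\cap U\neq\emptyset\}$ is open in $Y$ for every open $U\subseteq X$; a selection is a map $f:Y\to X$ with $f(y)\in\varphi(y)$ for all $y$. A space $X$ is self-selective if every l.s.c. map from $X$ to the nonempty closed subsets of $X$ has a continuous selection. The sequential fan $S_\omega$ is the quotient of the topological sum of countably many convergent sequences (with limits) obtained by identifying all limit points. Arens' space $S_2=\{x\}\cup\{x_n:n\in\omega\}\cup\{x_{n,m}:n,m\in\omega\}$: each $x_{n,m}$ is isolated; a neighborhood base at $x_n$ consists of the sets $\{x_n\}\cup\{x_{n,m}:m\in\omega\setminus K\}$, $K$ finite; a neighborhood base at $x$ consists of the sets $\{x\}\cup\{x_n:n\in\omega\setminus K\}\cup\{x_{n,m}:n\in\omega\setminus K,\ m>f(n)\}$ with $K$ finite and $f:\omega\to\omega$. *)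

From Stdlib Require Import Arith List.
Import ListNotations.

Definition opens (X : Type) := (X -> Prop) -> Prop.

Definition is_topology {X : Type} (O : opens X) : Prop :=
  O (fun _ => True) /\
  (forall U V, O U -> O V -> O (fun x => U x /\ V x)) /\
  (forall (I : Type) (F : I -> X -> Prop), (forall i, O (F i)) ->
      O (fun x => exists i, F i x)).

Definition is_closed {X : Type} (O : opens X) (A : X -> Prop) : Prop :=
  O (fun x => ~ A x).

Definition continuous {Y X : Type} (OY : opens Y) (OX : opens X) (f : Y -> X) : Prop :=
  forall U, OX U -> OY (fun y => U (f y)).

Definition lsc {Y X : Type} (OY : opens Y) (OX : opens X) (phi : Y -> X -> Prop) : Prop :=
  forall U, OX U -> OY (fun y => exists x, phi y x /\ U x).

Definition self_selective {X : Type} (O : opens X) : Prop :=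
  forall phi : X -> X -> Prop,
    (forall x, exists z, phi x z) ->
    (forall x, is_closed O (phi x)) ->
    lsc O O phi ->
    exists f : X -> X, continuous O O f /\ forall x, phi x (f x).

(* None = the (identified) limit point; Some (n, m) = m-th term of the n-th sequence. *)
Definition Sfan := option (nat * nat).

(* Quotient topology: U is open iff, when it contains the common limit, it contains
   a tail of every sequence (all sequence terms are isolated). *)
Definition Sfan_open : opens Sfan := fun U =>
  U None -> forall n, exists k, forall m, k <= m -> U (Some (n, m)).

Inductive Arens : Type :=
| a_pt : Arens
| a_row : nat -> Arens
| a_cell : nat -> nat -> Arens.

Definition arens_nbhd_row (n : nat) (K : list nat) : Arens -> Prop := fun z =>
  z = a_row n \/ exists m, ~ In m K /\ z = a_cell n m.

Definition arens_nbhd_pt (K : list nat) (f : nat -> nat) : Arens -> Prop := fun z =>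
  z = a_pt \/ (exists n, ~ In n K /\ z = a_row n) \/
  (exists n m, ~ In n K /\ f n < m /\ z = a_cell n m).

Definition Arens_open : opens Arens := fun U =>
  (U a_pt -> exists K f, forall z, arens_nbhd_pt K f z -> U z) /\
  (forall n, U (a_row n) -> exists K, forall z, arens_nbhd_row n K z -> U z).

(* Both phis are built so that a continuous selection would carry a sequence
   converging to a non-isolated point onto a sequence of points that cannot
   converge to its image.  In S_omega, phi sends the m-th term of every sequence
   to the K-th terms of the first K+1 sequences together with the m-th terms of
   the later ones, where K = K(m) takes every value infinitely often; it is l.s.c.
   at the limit because an open set around it contains the K-th terms of the
   0-th sequence for large K and the m-th terms of the first few sequences for
   large m.  A selection converging to the limit along the 0-th sequence must
   eventually avoid the finitely many K-th terms, so for each K it picks a point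
   of a sequence of index > K; these points form a closed set missing the limit.
   In S_2, phi sends x_0 to {x}, x_{0,m} to {x_{n,m} : n <= m}, and every other
   point to S_2; it is l.s.c. at x_0 because a neighbourhood of x contains
   x_{n,m} for some fixed n and all large m.  A selection would produce isolated
   points x_{r(m),m} converging to x, and no sequence of isolated points of S_2
   converges to x. *)
From Stdlib Require Import Arith List Lia Classical IndefiniteDescription
  FunctionalExtensionality Cantor.

Definition eventually (P : nat -> Prop) : Prop := exists k, forall m, k <= m -> P m.

Lemma eventually_mono (P Q : nat -> Prop) :
  (forall m, P m -> Q m) -> eventually P -> eventually Q.
Proof. intros HPQ [k Hk]. exists k. auto. Qed.

Lemma eventually_and (P Q : nat -> Prop) :
  eventually P -> eventually Q -> eventually (fun m => P m /\ Q m).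
Proof.
  intros [k Hk] [l Hl]. exists (Nat.max k l). intros m Hm. split; [apply Hk | apply Hl]; lia.
Qed.

Lemma eventually_ge (k : nat) : eventually (fun m => k <= m).
Proof. exists k. auto. Qed.

Lemma eventually_forall_lt (P : nat -> nat -> Prop) :
  (forall i, eventually (P i)) -> forall n, eventually (fun m => forall i, i < n -> P i m).
Proof.
  intros HP n. induction n as [|n IHn].
  - exists 0. intros m _ i Hi. lia.
  - eapply eventually_mono; [|exact (eventually_and _ _ IHn (HP n))].
    intros m [Hlt Hn] i Hi. destruct (Nat.eq_dec i n) as [->|Hin]; [exact Hn|].
    apply Hlt. lia.
Qed.

Lemma eventually_not_In (K : list nat) : eventually (fun m => ~ In m K).
Proof.
  induction K as [|a K [M HM]]; [exists 0; simpl; tauto|].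
  exists (S (a + M)). intros m Hm [->|H]; [lia|]. apply (HM m); [lia|exact H].
Qed.

Lemma not_In_seq0 (N n : nat) : ~ In n (seq 0 N) <-> N <= n.
Proof. rewrite in_seq. lia. Qed.

Definition converges {X : Type} (O : opens X) (s : nat -> X) (x : X) : Prop :=
  forall U, O U -> U x -> eventually (fun m => U (s m)).

Lemma continuous_converges {Y X : Type} (OY : opens Y) (OX : opens X) (f : Y -> X)
  (s : nat -> Y) (y : Y) :
  continuous OY OX f -> converges OY s y -> converges OX (fun m => f (s m)) (f y).
Proof. intros Hf Hs U HU Uy. exact (Hs _ (Hf U HU) Uy). Qed.

Lemma converges_subseq {X : Type} (O : opens X) (s : nat -> X) (x : X) (h : nat -> nat) :
  (forall k, k <= h k) -> converges O s x -> converges O (fun k => s (h k)) x.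
Proof.
  intros Hh Hs U HU Ux. destruct (Hs U HU Ux) as [M HM].
  exists M. intros k Hk. apply HM. specialize (Hh k). lia.
Qed.

Lemma Sfan_eventually_neq (n : nat) (z : Sfan) : eventually (fun j => Some (n, j) <> z).
Proof.
  destruct z as [[c j]|].
  - exists (S j). intros m Hm E. injection E. lia.
  - exists 0. discriminate.
Qed.

Lemma Sfan_open_neq (z : Sfan) : Sfan_open (fun w => w <> z).
Proof. intros _ n. apply Sfan_eventually_neq. Qed.

Lemma Sfan_column_converges (n : nat) : converges Sfan_open (fun m => Some (n, m)) None.
Proof. intros U HU UN. exact (HU UN n). Qed.

Lemma Sfan_converges_avoid (s : nat -> Sfan) (z : Sfan) :
  converges Sfan_open s None -> z <> None -> eventually (fun m => s m <> z).
Proof. intros Hs Hz. exact (Hs _ (Sfan_open_neq z) (not_eq_sym Hz)). Qed.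

Lemma Sfan_spread_not_converges (y : nat -> Sfan) :
  (forall k, exists c j, y k = Some (c, j) /\ k < c) -> ~ converges Sfan_open y None.
Proof.
  intros Hy Hconv.
  set (U := fun z => forall k, z <> y k).
  assert (HU : Sfan_open U).
  { intros _ n.
    apply (eventually_mono (fun j => forall k, k < n -> Some (n, j) <> y k)).
    - intros j Hj k. destruct (Nat.lt_ge_cases k n) as [Hk|Hk]; [exact (Hj k Hk)|].
      destruct (Hy k) as [c [i [-> Hc]]]. intros E. injection E. lia.
    - apply eventually_forall_lt. intros k. apply Sfan_eventually_neq. }
  assert (UN : U None).
  { intros k E. destruct (Hy k) as [c [i [Hyk _]]]. congruence. }
  destruct (Hconv U HU UN) as [M HM]. exact (HM M (le_n M) M eq_refl).
Qed.

Definition fan_tag (m : nat) : nat := fst (Cantor.of_nat m).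

Lemma fan_tag_unbounded (K B : nat) : exists m, B <= m /\ fan_tag m = K.
Proof.
  exists (Cantor.to_nat (K, B)). unfold fan_tag. rewrite Cantor.cancel_of_to.
  split; [|reflexivity]. pose proof (Cantor.to_nat_non_decreasing K B). lia.
Qed.

Definition fan_value (m : nat) (z : Sfan) : Prop :=
  match z with
  | None => False
  | Some (k, j) => (k <= fan_tag m /\ j = fan_tag m) \/ (fan_tag m < k /\ j = m)
  end.

Definition fan_phi (y : Sfan) : Sfan -> Prop :=
  match y with
  | None => fun z => z = None
  | Some (_, m) => fan_value m
  end.

Lemma fan_phi_nonempty (y : Sfan) : exists z, fan_phi y z.
Proof.
  destruct y as [[n m]|]; simpl; [|eauto].
  exists (Some (0, fan_tag m)). left. split; [lia | reflexivity].
Qed.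

Lemma fan_phi_closed (y : Sfan) : is_closed Sfan_open (fan_phi y).
Proof.
  destruct y as [[n m]|]; unfold is_closed, Sfan_open; simpl.
  - intros _ c. exists (S (fan_tag m + m)). intros j Hj. lia.
  - intros HN. contradiction (HN eq_refl).
Qed.

Lemma fan_phi_lsc : lsc Sfan_open Sfan_open fan_phi.
Proof.
  intros U HU [z [-> UN]] n. simpl.
  destruct (HU UN 0) as [a Ha].
  apply (eventually_mono (fun m => a <= m /\ forall c, c < S a -> U (Some (c, m)))).
  - intros m [Ham Hm]. destruct (le_lt_dec a (fan_tag m)) as [Hle|Hlt].
    + exists (Some (0, fan_tag m)). split; [left; split; [lia | reflexivity] | exact (Ha _ Hle)].
    + exists (Some (S (fan_tag m), m)). split; [right; split; [lia | reflexivity]|].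
      apply Hm. lia.
  - apply eventually_and; [apply eventually_ge|].
    apply (eventually_forall_lt (fun c m => U (Some (c, m)))). intros c. exact (HU UN c).
Qed.

Lemma fan_value_escapes (x : nat -> Sfan) :
  converges Sfan_open x None -> (forall m, fan_value m (x m)) ->
  forall K, exists m, K <= m /\ exists c j, x m = Some (c, j) /\ K < c.
Proof.
  intros Hx Hval K.
  assert (Havoid : forall c, eventually (fun m => x m <> Some (c, K))).
  { intros c. apply Sfan_converges_avoid; [exact Hx | discriminate]. }
  destruct (eventually_forall_lt _ Havoid (S K)) as [B HB].
  destruct (fan_tag_unbounded K (Nat.max B K)) as [m [Hm Htag]].
  exists m. split; [lia|].
  specialize (Hval m). destruct (x m) as [[c j]|] eqn:E; [|contradiction].
  exists c, j. split; [reflexivity|]. simpl in Hval. rewrite Htag in Hval.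
  destruct Hval as [[Hc ->]|[Hc _]]; [|exact Hc].
  exfalso. apply (HB m ltac:(lia) c ltac:(lia) E).
Qed.

Lemma Sfan_not_self_selective : ~ self_selective Sfan_open.
Proof.
  intros Hsel.
  destruct (Hsel fan_phi fan_phi_nonempty fan_phi_closed fan_phi_lsc) as [f [Hf Hsf]].
  set (x := fun m => f (Some (0, m))).
  assert (Hx : converges Sfan_open x None).
  { rewrite <- (Hsf None : f None = None).
    exact (continuous_converges _ _ f _ _ Hf (Sfan_column_converges 0)). }
  destruct (functional_choice _ (fan_value_escapes x Hx (fun m => Hsf (Some (0, m)))))
    as [h Hh].
  apply (Sfan_spread_not_converges (fun k => x (h k))).
  - intros k. exact (proj2 (Hh k)).
  - exact (converges_subseq _ x None h (fun k => proj1 (Hh k)) Hx).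
Qed.

Lemma Arens_openE (U : Arens -> Prop) :
  Arens_open U <->
  (U a_pt -> exists g : nat -> nat,
      eventually (fun n => U (a_row n) /\ forall m, g n <= m -> U (a_cell n m))) /\
  (forall n, U (a_row n) -> eventually (fun m => U (a_cell n m))).
Proof.
  split; intros [Hpt Hrow]; split.
  - intros Ua. destruct (Hpt Ua) as [K [f Hf]].
    exists (fun n => S (f n)).
    eapply eventually_mono; [|exact (eventually_not_In K)]. intros n Hn.
    split; [apply Hf; right; left; eauto|].
    intros m Hm. apply Hf. right; right. exists n, m. repeat split; auto.
  - intros n Un. destruct (Hrow n Un) as [K HK].
    eapply eventually_mono; [|exact (eventually_not_In K)]. intros m Hm.
    apply HK. right. eauto.
  - intros Ua. destruct (Hpt Ua) as [g [N HN]]. exists (seq 0 N), g.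
    intros z [->|[[n [Hn ->]]|[n [m [Hn [Hm ->]]]]]].
    + exact Ua.
    + exact (proj1 (HN n (proj1 (not_In_seq0 N n) Hn))).
    + apply (proj2 (HN n (proj1 (not_In_seq0 N n) Hn))). lia.
  - intros n Un. destruct (Hrow n Un) as [B HB]. exists (seq 0 B).
    intros z [->|[m [Hm ->]]]; [exact Un|]. apply HB, not_In_seq0, Hm.
Qed.

Lemma Arens_row_converges (n : nat) : converges Arens_open (fun m => a_cell n m) (a_row n).
Proof. intros U HU Un. exact (proj2 (proj1 (Arens_openE U) HU) n Un). Qed.

Lemma Arens_cells_not_converges (r : nat -> nat) :
  ~ converges Arens_open (fun m => a_cell (r m) m) a_pt.
Proof.
  intros Hr. destruct (classic (forall n, eventually (fun m => r m <> n))) as [Hfin|Hinf].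
  - destruct (functional_choice _ Hfin) as [g Hg].
    set (U := fun z => match z with a_cell k j => r j <> k | _ => True end).
    assert (HU : Arens_open U).
    { apply Arens_openE. split.
      - intros _. exists g. exists 0. intros n _. split; [exact I|]. exact (Hg n).
      - intros n _. exact (Hfin n). }
    destruct (Hr U HU I) as [M HM]. exact (HM M (le_n M) eq_refl).
  - apply not_all_ex_not in Hinf as [n Hn]. apply Hn.
    set (U := fun z => match z with a_pt => True | a_row k => k <> n | a_cell k _ => k <> n end).
    assert (HU : Arens_open U).
    { apply Arens_openE. split.
      - intros _. exists (fun _ => 0). exists (S n). intros k Hk.
        split; [simpl; lia|]. intros m _. simpl. lia.
      - intros k Hk. exists 0. intros m _. exact Hk. }
    exact (Hr U HU I).
Qed.

Definition arens_phi (y : Arens) : Arens -> Prop :=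
  match y with
  | a_row 0 => fun z => z = a_pt
  | a_cell 0 m => fun z => exists n, n <= m /\ z = a_cell n m
  | _ => fun _ => True
  end.

Lemma arens_phi_nonempty (y : Arens) : exists z, arens_phi y z.
Proof. destruct y as [|[|n]|[|n] m]; simpl; eauto; exists a_pt; exact I. Qed.

Lemma arens_phi_closed (y : Arens) : is_closed Arens_open (arens_phi y).
Proof.
  unfold is_closed. apply Arens_openE.
  destruct y as [|[|n]|[|n] m]; simpl; split;
    try (intros H; contradiction (H I)); try (intros ? H; contradiction (H I)).
  - intros H. contradiction (H eq_refl).
  - intros n _. exists 0. intros m _. discriminate.
  - intros _. exists (fun _ => S m). exists 0. intros n _.
    split; [intros [k [_ E]]; discriminate|]. intros j Hj [k [_ E]]. injection E. lia.
  - intros n _. exists (S m). intros j Hj [k [_ E]]. injection E. lia.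
Qed.

Lemma arens_phi_lsc : lsc Arens_open Arens_open arens_phi.
Proof.
  intros U HU. apply Arens_openE.
  destruct (classic (exists u, U u)) as [[u Uu]|Hempty].
  - split.
    + intros _. exists (fun _ => 0). exists 1. intros [|n] Hn; [lia|].
      split; [|intros m _]; exists u; split; [exact I | exact Uu | exact I | exact Uu].
    + intros [|n] Vn.
      * destruct Vn as [z [-> Ua]].
        destruct (proj1 (proj1 (Arens_openE U) HU) Ua) as [g [N HN]].
        exists (Nat.max N (g N)). intros m Hm. exists (a_cell N m). split.
        -- exists N. split; [lia | reflexivity].
        -- apply (proj2 (HN N (le_n N))). lia.
      * exists 0. intros m _. exists u. split; [exact I | exact Uu].
  - split; [intros [z [_ Uz]] | intros n [z [_ Uz]]]; contradiction (Hempty (ex_intro _ z Uz)).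
Qed.

Lemma Arens_not_self_selective : ~ self_selective Arens_open.
Proof.
  intros Hsel.
  destruct (Hsel arens_phi arens_phi_nonempty arens_phi_closed arens_phi_lsc) as [f [Hf Hsf]].
  assert (Hcell : forall m, exists n, f (a_cell 0 m) = a_cell n m).
  { intros m. destruct (Hsf (a_cell 0 m)) as [n [_ E]]. eauto. }
  destruct (functional_choice _ Hcell) as [r Hr].
  apply (Arens_cells_not_converges r).
  replace (fun m => a_cell (r m) m) with (fun m => f (a_cell 0 m))
    by (apply functional_extensionality; exact Hr).
  rewrite <- (Hsf (a_row 0) : f (a_row 0) = a_pt).
  exact (continuous_converges _ _ f _ _ Hf (Arens_row_converges 0)).
Qed.

Theorem mainTheorem18 :
  ~ self_selective Sfan_open /\ ~ self_selective Arens_open.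
Proof. split; [exact Sfan_not_self_selective | exact Arens_not_self_selective]. Qed.
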